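(* Let $r, s, m, n$ be positive integers such that $\frac{r+s}{\gcd(r,s)}$ divides $m$. If $f: V(H_{n,m}) \rightarrow \{-r,s\}$ is a function with $f(V(H_{n,m})) = 0$, then $H_{n,m}$ can be decomposed into $n$ vertex-disjoint directed $m$-paths $P_1, \ldots, P_n$ with $f(V(P_i))=0$ for all $1\le i\le n$.
   Context: For a set $Y$ of vertices, $f(Y)=\sum_{y\in Y}f(y)$. $H_{n,m}$ is the directed graph whose vertex set is the disjoint union of $V_1,\dots,V_m$ with $|V_i|=n$, and whose arc set is $\bigcup_{i=1}^{m-1}\{(v,w): v\in V_i, w\in V_{i+1}\}$. A directed $m$-path is a directed path with $m$ vertices. *)

From mathcomp Require Import all_boot all_order all_algebra.
Set Implicit Arguments. Unset Strict Implicit. Unset Printing Implicit Defensive.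

(* Vertices of H_{n,m}: pairs (layer, index) with layer in 'I_m (V_1..V_m as
   layers 0..m-1) and index in 'I_n (|V_i| = n). *)
Definition Hvert (n m : nat) : finType := ('I_m * 'I_n)%type.

Definition Harc (n m : nat) : rel (Hvert n m) :=
  fun v w => (nat_of_ord v.1).+1 == nat_of_ord w.1.

Definition dipath (T : eqType) (e : rel T) (p : seq T) : bool :=
  match p with
  | [::] => false
  | x :: q => path e x q && uniq p
  end.

Definition dipath_k (T : eqType) (e : rel T) (k : nat) (p : seq T) : bool :=
  dipath e p && (size p == k).

From mathcomp Require Import all_boot all_order all_algebra zify ring.
Import GRing.Theory.
Set Implicit Arguments. Unset Strict Implicit. Unset Printing Implicit Defensive.

(* Call a vertex positive when f takes the value s there.  List every layer
   with its positive vertices first, and let path i take, in layer l, the vertex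
   at position i - C_l (mod n), where C_l is the number of positive vertices in
   the layers before l.  The positive vertices of the successive layers are thus
   dealt out to the n paths cyclically, so path i receives one of them for every
   t < C_m with t = i (mod n).  As f sums to zero, C_m (r + s) = m n r, and the
   hypothesis (r + s) / gcd(r, s) | m makes n divide C_m: every path receives
   exactly C_m / n positive vertices, hence has f-sum (C_m / n)(r + s) - m r = 0. *)

Lemma divn_lt_double n x : x < n.*2 -> x %/ n = (n <= x).
Proof.
move=> x_lt; case: leqP => [le_nx|lt_xn]; last exact: divn_small.
by rewrite -(subnKC le_nx) -{1}[n]mul1n divnMDl ?divn_small //; lia.
Qed.

Lemma modn_lt_double n x : x < n.*2 -> x %% n = if n <= x then x - n else x.
Proof.
move=> x_lt; have := divn_eq x n; rewrite divn_lt_double //.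
by case: leqP; lia.
Qed.

(* The forward distance from c to i on the n-cycle: i lies in the cyclic
   window [c, c + p) iff cyc_dist n c i < p. *)
Definition cyc_dist (n c i : nat) : nat := (i + (n - c %% n)) %% n.

Lemma cyc_dist_lt n c i : 0 < n -> cyc_dist n c i < n.
Proof. exact: ltn_pmod. Qed.

Lemma cyc_dist_inj n c i j : i < n -> j < n -> cyc_dist n c i = cyc_dist n c j -> i = j.
Proof. by move=> i_lt j_lt /eqP; rewrite eqn_modDr !modn_small // => /eqP. Qed.

(* c %/ n + (i < c %% n) counts the t < c with t = i (mod n). *)
Lemma cyc_window_step n c p i : 0 < n -> i < n -> p <= n ->
  (cyc_dist n c i < p) + (c %/ n + (i < c %% n))
  = (c + p) %/ n + (i < (c + p) %% n).
Proof.
move=> n_gt0 i_lt p_le; rewrite /cyc_dist.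
move: (divn_eq c n) (ltn_mod c n); rewrite n_gt0.
set q := c %/ n; set d := c %% n; clearbody q d => -> d_lt.
rewrite -addnA divnMDl // !modnMDl.
rewrite (divn_lt_double (x := d + p)) ?(modn_lt_double (x := d + p)); try lia.
rewrite (modn_lt_double (x := i + (n - d))); last lia.
case: (leqP n (i + (n - d))) => ?; case: (leqP n (d + p)) => ?;
  do 3 case: ltnP => ?; lia.
Qed.

Section EnumFirst.
Variables (T : finType) (a : pred T).

Definition enum_first : seq T := filter a (enum T) ++ filter (predC a) (enum T).

Lemma perm_enum_first : perm_eq enum_first (enum T).
Proof. by rewrite /enum_first perm_filterC. Qed.

Lemma size_enum_first : size enum_first = #|T|.
Proof. by rewrite (perm_size perm_enum_first) cardE. Qed.

Lemma enum_first_uniq : uniq enum_first.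
Proof. by rewrite (perm_uniq perm_enum_first) enum_uniq. Qed.

Lemma count_enum_card : count a (enum T) = #|a|.
Proof. by rewrite enumT cardE /enum_mem size_filter. Qed.

Lemma nth_enum_first x0 q : q < #|T| -> a (nth x0 enum_first q) = (q < #|a|).
Proof.
move=> q_lt; rewrite nth_cat size_filter count_enum_card.
case: ltnP => [lt_qa|le_aq].
  have : nth x0 (filter a (enum T)) q \in filter a (enum T).
    by apply: mem_nth; rewrite size_filter count_enum_card.
  by rewrite mem_filter => /andP[].
have : nth x0 (filter (predC a) (enum T)) (q - #|a|) \in filter (predC a) (enum T).
  apply: mem_nth; move: q_lt le_aq; rewrite -size_enum_first size_cat.
  by rewrite [size (filter a _)]size_filter count_enum_card => lt_q le_q; rewrite ltn_subLR.
by rewrite mem_filter => /andP[/negbTE].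
Qed.
End EnumFirst.

Lemma count_cyc_windows n (p : nat -> nat) i k : 0 < n -> i < n -> (forall l, p l <= n) ->
  \sum_(l < k) (cyc_dist n (\sum_(j < l) p j) i < p l)
  = (\sum_(l < k) p l) %/ n + (i < (\sum_(l < k) p l) %% n).
Proof.
move=> n_gt0 i_lt p_le; elim: k => [|k IHk]; first by rewrite !big_ord0 div0n mod0n.
by rewrite !big_ord_recr /= addnC IHk cyc_window_step.
Qed.

Lemma iota_succ_path k l : path (fun a b => a.+1 == b) k (iota k.+1 l).
Proof. by elim: l k => [|l IHl] k //=; rewrite eqxx IHl. Qed.

Lemma enum_ord_succ_sorted m : sorted (fun a b : 'I_m => a.+1 == b) (enum 'I_m).
Proof.
rewrite -(sorted_map (f := val) (e' := fun a b => a.+1 == b)) val_enum_ord.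
by case: m => //= m; apply: iota_succ_path.
Qed.

Section LayeredPaths.
Variables n m : nat.

Definition layered_path (x : 'I_m -> 'I_n) : seq (Hvert n m) :=
  [seq (l, x l) | l <- enum 'I_m].

Lemma layered_path_dipath x : 0 < m -> dipath_k (@Harc n m) m (layered_path x).
Proof.
move=> m_gt0.
have sorted_x : sorted (@Harc n m) (layered_path x).
  by rewrite sorted_map; apply: enum_ord_succ_sorted.
have uniq_x : uniq (layered_path x) by rewrite map_inj_uniq ?enum_uniq // => l l' [].
have size_x : size (layered_path x) = m by rewrite size_map size_enum_ord.
rewrite /dipath_k size_x eqxx andbT.
by case: (layered_path x) sorted_x uniq_x size_x m_gt0 => [_ _ <-|v p /= -> ->].
Qed.

Lemma count_layered_path (a : pred (Hvert n m)) x :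
  count a (layered_path x) = \sum_(l < m) a (l, x l).
Proof. by rewrite count_map -sum1_count big_mkcond big_enum. Qed.

Variable x : 'I_n -> 'I_m -> 'I_n.
Hypothesis x_inj : forall l, injective (x^~ l).

Lemma layered_paths_disjoint i j :
  i != j -> forall v, v \in layered_path (x i) -> v \notin layered_path (x j).
Proof.
move=> neq_ij v /mapP[l _ ->]; apply/mapP => -[l' _ [<-]] /x_inj eq_ij.
by rewrite eq_ij eqxx in neq_ij.
Qed.

Lemma layered_paths_cover v : exists i, v \in layered_path (x i).
Proof.
case: v => l j; have [y xK yK] := injF_bij (@x_inj l).
by exists (y j); apply/mapP; exists l; rewrite ?mem_enum ?yK.
Qed.
End LayeredPaths.

Section RoundRobin.
Variables (n m : nat) (a : pred (Hvert n m)).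
Hypothesis n_gt0 : 0 < n.

Definition layer (l : 'I_m) : pred 'I_n := [pred j | a (l, j)].

(* Indexed by nat, and 0 beyond the last layer, so that prefix sums over
   layers are plain sums over ordinals. *)
Definition layer_card (k : nat) : nat :=
  if insub k is Some l then #|layer l| else 0.

Definition round_robin (i : 'I_n) (l : 'I_m) : 'I_n :=
  nth i (enum_first (layer l)) (cyc_dist n (\sum_(k < l) layer_card k) i).

Lemma layer_cardE (l : 'I_m) : layer_card l = #|layer l|.
Proof. by rewrite /layer_card valK. Qed.

Lemma layer_card_le k : layer_card k <= n.
Proof.
by rewrite /layer_card; case: insub => // l; rewrite -[n in _ <= n]card_ord max_card.
Qed.

Lemma sum_layer_card : \sum_(k < m) layer_card k = #|a|.
Proof.
under eq_bigr do rewrite layer_cardE -sum1_card.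
rewrite pair_big_dep /= -sum1_card.
by apply: eq_bigl => -[l j].
Qed.

Lemma round_robin_inj l : injective (round_robin^~ l).
Proof.
have lt_n i : cyc_dist n (\sum_(k < l) layer_card k) i < size (enum_first (layer l)).
  by rewrite size_enum_first card_ord cyc_dist_lt.
move=> i j /eqP; rewrite /round_robin (set_nth_default i) // nth_uniq ?enum_first_uniq //.
by move=> /eqP /cyc_dist_inj eq_ij; apply: val_inj; apply: eq_ij.
Qed.

Lemma round_robinP i l :
  a (l, round_robin i l) = (cyc_dist n (\sum_(k < l) layer_card k) i < layer_card l).
Proof.
by rewrite layer_cardE -(nth_enum_first (layer l) i) // card_ord cyc_dist_lt.
Qed.

Lemma count_round_robin_path i :
  count a (layered_path (round_robin i)) = #|a| %/ n + (i < #|a| %% n).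
Proof.
rewrite count_layered_path; under eq_bigr do rewrite round_robinP.
by rewrite count_cyc_windows // ?sum_layer_card //; apply: layer_card_le.
Qed.

Lemma balanced_layered_paths : 0 < m -> n %| #|a| ->
  exists P : 'I_n -> seq (Hvert n m),
    [/\ forall i, dipath_k (@Harc n m) m (P i),
        forall i j, i != j -> forall v, v \in P i -> v \notin P j,
        forall v, exists i, v \in P i
      & forall i, count a (P i) = #|a| %/ n].
Proof.
move=> m_gt0 /eqP n_dvd; exists (fun i => layered_path (round_robin i)); split.
- by move=> i; apply: layered_path_dipath.
- exact: layered_paths_disjoint (@round_robin_inj).
- exact: layered_paths_cover (@round_robin_inj).
- by move=> i; rewrite count_round_robin_path n_dvd addn0.
Qed.
End RoundRobin.

Lemma dvdn_of_balance r s m n t : 0 < r -> (r + s) %/ gcdn r s %| m ->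
  t * (r + s) = m * n * r -> n %| t.
Proof.
move=> r_gt0 /dvdnP[k ->] balance.
have g_gt0 : 0 < gcdn r s by rewrite gcdn_gt0 r_gt0.
have rsK : (r + s) %/ gcdn r s * gcdn r s = r + s.
  by rewrite divnK // dvdn_add ?dvdn_gcdl ?dvdn_gcdr.
have rK : r %/ gcdn r s * gcdn r s = r by rewrite divnK // dvdn_gcdl.
apply/dvdnP; exists (k * (r %/ gcdn r s)); apply/eqP.
rewrite -(eqn_pmul2r (_ : 0 < r + s)) ?balance; last by rewrite addn_gt0 r_gt0.
move: rsK rK; set S := (r + s) %/ _; set R := r %/ _; set g := gcdn r s.
by move=> <- <-; apply/eqP; ring.
Qed.

Local Open Scope ring_scope.

Lemma sum_two_valued (T : Type) (f : T -> int) (r s : nat) (t : seq T) :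
  (forall v, f v = - r%:Z \/ f v = s%:Z) ->
  \sum_(v <- t) f v = (count (fun v => f v == s%:Z) t * (r + s))%:Z - (size t * r)%:Z.
Proof.
move=> hf; elim: t => [|v t IHt] /=; first by rewrite big_nil.
rewrite big_cons IHt; case: (hf v) => ->; last by rewrite eqxx; lia.
by case: eqP; lia.
Qed.

Theorem corollary4p4 (r s m n : nat)
  (hr : (0 < r)%N) (hs : (0 < s)%N) (hm : (0 < m)%N) (hn : (0 < n)%N)
  (hdiv : ((r + s) %/ gcdn r s %| m)%N)
  (f : Hvert n m -> int)
  (hf : forall v, f v = - (r%:Z) \/ f v = s%:Z)
  (hsum : \sum_(v : Hvert n m) f v = 0) :
  exists P : 'I_n -> seq (Hvert n m),
    (forall i, dipath_k (@Harc n m) m (P i)) /\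
    (forall i j, i != j -> forall v, v \in P i -> v \notin P j) /\
    (forall v : Hvert n m, exists i, v \in P i) /\
    (forall i, \sum_(v <- P i) f v = 0).
Proof.
pose pos v := f v == s%:Z.
have sum_f t : \sum_(v <- t) f v = (count pos t * (r + s))%:Z - (size t * r)%:Z.
  exact: sum_two_valued.
have balance : (#|pos| * (r + s) = m * n * r)%N.
  move: hsum; rewrite -big_enum sum_f count_enum_card -cardT card_prod !card_ord /=.
  by move/eqP; rewrite subr_eq0 eqz_nat => /eqP.
have n_dvd := dvdn_of_balance hr hdiv balance.
have path_balance : (#|pos| %/ n * (r + s) = m * r)%N.
  by apply/eqP; rewrite -(eqn_pmul2r hn) mulnAC divnK // balance mulnAC.
have [P [P_path P_disj P_cover P_count]] := balanced_layered_paths hn hm n_dvd.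
exists P; split; [done | split; [done | split; [done | move=> i]]].
have /andP[_ /eqP size_P] := P_path i.
by rewrite sum_f P_count size_P path_balance subrr.
Qed.
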